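(* Let $K$ be a field of characteristic $p>0$, and let $\sigma,\tau$ be $K$-algebra automorphisms of the ring $\mathcal{D}(P_n)$ of differential operators on $P_n=K[x_1,\ldots,x_n]$. Then $\sigma=\tau$ if and only if $\sigma(x_i)=\tau(x_i)$ for all $i=1,\ldots,n$.
   Context: For $i=1,\ldots,n$ and $k\in\mathbb{N}$, $\partial_i^{[k]}=\partial_i^k/k!$ denotes the $K$-linear map of $P_n$ given by $\partial_i^{[k]}(x^m)=\binom{m_i}{k}x^{m-ke_i}$ (zero if $m_i<k$), where $x^m=x_1^{m_1}\cdots x_n^{m_n}$ and $e_1,\ldots,e_n$ is the standard basis of $\mathbb{Z}^n$. The ring $\mathcal{D}(P_n)$ is the subalgebra of $\mathrm{End}_K(P_n)$ generated by $P_n$ (acting by multiplication) and all $\partial_i^{[k]}$; one has $\mathcal{D}(P_n)=\bigoplus_{\alpha\in\mathbb{N}^n}P_n\partial^{[\alpha]}$ with $\partial^{[\alpha]}=\prod_i\partial_i^{[\alpha_i]}$. $\mathrm{Aut}_K(\mathcal{D}(P_n))$ is the group of $K$-algebra automorphisms. *)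

From HB Require Import structures.
From mathcomp Require Import all_boot all_order all_algebra.
From mathcomp Require Import mpoly.
Set Implicit Arguments. Unset Strict Implicit. Unset Printing Implicit Defensive.
Import GRing.Theory.
Local Open Scope ring_scope.

Section DiffOps.
Variables (n : nat) (K : fieldType).

(* P_n = K[x_1..x_n] and the K-linear endomorphisms are represented as
   functions P_n -> P_n (membership in D(P_n) forces K-linearity). *)
Definition Op := {mpoly K[n]} -> {mpoly K[n]}.

Definition mulOp (f : {mpoly K[n]}) : Op := fun g => f * g.

(* divided-power derivative  d_i^[k] (x^m) = C(m_i,k) x^(m - k e_i),
   extended K-linearly; when m_i < k the binomial is 0. *)
Definition ddiff (i : 'I_n) (k : nat) : Op := fun g =>
  \sum_(m <- msupp g)
     (g@_m * ('C(m i, k))%:R) *: 'X_[(m - (U_(i) *+ k))%MM].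

Definition addOp (a b : Op) : Op := fun g => a g + b g.
Definition compOp (a b : Op) : Op := fun g => a (b g).
Definition scaleOp (c : K) (a : Op) : Op := fun g => c *: a g.
Definition idOp : Op := fun g => g.

Inductive inD : Op -> Prop :=
  | inD_mul f : inD (mulOp f)
  | inD_dd i k : inD (ddiff i k)
  | inD_add a b : inD a -> inD b -> inD (addOp a b)
  | inD_comp a b : inD a -> inD b -> inD (compOp a b)
  | inD_scale c a : inD a -> inD (scaleOp c a).

(* sigma is (the action on D(P_n) of) a K-algebra automorphism of D(P_n) *)
Definition isAutD (s : Op -> Op) : Prop :=
  (forall a, inD a -> inD (s a)) /\
  (forall a b, inD a -> inD b -> s (addOp a b) = addOp (s a) (s b)) /\
  (forall a b, inD a -> inD b -> s (compOp a b) = compOp (s a) (s b)) /\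
  (forall c a, inD a -> s (scaleOp c a) = scaleOp c (s a)) /\
  s idOp = idOp /\
  (forall a b, inD a -> inD b -> s a = s b -> a = b) /\
  (forall b, inD b -> exists2 a, inD a & s a = b).

End DiffOps.

From mathcomp Require Import all_boot all_order all_algebra.
From mathcomp Require Import zify ring.
From mathcomp Require Import mpoly ssrcomplements.
From Stdlib Require Import FunctionalExtensionality.
Set Implicit Arguments. Unset Strict Implicit. Unset Printing Implicit Defensive.
Import GRing.Theory.

(* D(P_n) is generated by the x_i and the divided powers d_i^[k], so it is
   enough to show, by induction on k, that sigma and tau agree on d_i^[k+1].
   By the Leibniz rule [d_i^[k+1], x_j] = delta_ij d_i^[k], the difference
   sigma(d_i^[k+1]) - tau(d_i^[k+1]) commutes with every sigma(x_j) = tau(x_j);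
   its preimage under sigma commutes with all x_j and is therefore
   multiplication by a polynomial g, i.e. sigma(d) = tau(d + g) for
   d = d_i^[k+1].  In characteristic p we have
   d d_i^[(p-1)(k+1)] = binom(p(k+1), k+1) d_i^[p(k+1)] = 0, whereas d + g is
   injective on P_n when g <> 0 because d strictly lowers the degree;
   transporting the identity by sigma and tau^-1 gives g = 0. *)

Lemma bin_mul_bin_sub m k l :
  'C(m, l) * 'C(m - l, k) = 'C(m, k + l) * 'C(k + l, k).
Proof.
have [le_klm|lt_mkl] := leqP (k + l) m; last first.
  rewrite (bin_small lt_mkl) mul0n.
  have [le_lm|lt_ml] := leqP l m; last by rewrite bin_small.
  by rewrite (@bin_small (m - l)) ?muln0 //; lia.
have fact_l := @bin_fact m l ltac:(lia).
have fact_k := @bin_fact (m - l) k ltac:(lia).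
have fact_kl := bin_fact le_klm.
have fact_kkl := @bin_fact (k + l) k ltac:(lia).
rewrite (_ : m - l - k = m - (k + l)) in fact_k; last by lia.
rewrite (_ : k + l - k = l) in fact_kkl; last by lia.
apply/eqP; rewrite -(eqn_pmul2r (fact_gt0 l)) -(eqn_pmul2r (fact_gt0 k)).
rewrite -(eqn_pmul2r (fact_gt0 (m - (k + l)))); apply/eqP.
transitivity ('C(m, l) * (l`! * ('C(m - l, k) * (k`! * (m - (k + l))`!)))).
  by ring.
by rewrite fact_k fact_l -fact_kl -fact_kkl; ring.
Qed.

Lemma dvdn_bin_mul p k : 0 < k -> p %| 'C(p * k, k).
Proof.
move=> k_gt0; have := mul_bin_diag (p * k) k.-1; rewrite prednK // => E.
suff -> : 'C(p * k, k) = p * 'C((p * k).-1, k.-1) by apply: dvdn_mulr.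
by apply/eqP; rewrite -(eqn_pmul2l k_gt0) -E; apply/eqP; ring.
Qed.

Local Open Scope ring_scope.

Section MonomialExtension.
Variables (n : nat) (K : fieldType).
Implicit Types (F : 'X_{1..n} -> {mpoly K[n]}) (f g : {mpoly K[n]}).

Definition mextend F g := \sum_(m <- msupp g) g@_m *: F m.

Lemma mextend_bounded F g k : (msize g <= k)%N ->
  mextend F g = \sum_(m : 'X_{1..n < k}) g@_m *: F m.
Proof.
move=> le_gk; rewrite /mextend (big_mksub 'X_{1..n < k}) ?msupp_uniq //=.
  by rewrite big_rmcond //= => m /memN_msupp_eq0 ->; rewrite scale0r.
by move=> m /msize_mdeg_lt /leq_trans; apply.
Qed.

Lemma mextend_linear F : linear (mextend F).
Proof.
move=> c f g; set k := maxn (msize (c *: f + g)) (maxn (msize f) (msize g)).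
rewrite !(@mextend_bounded F _ k) ?leq_max ?leqnn ?orbT //.
rewrite scaler_sumr -big_split /=; apply: eq_bigr => m _.
by rewrite mcoeffD mcoeffZ scalerDl scalerA.
Qed.

Lemma mextendX F m : mextend F 'X_[m] = F m.
Proof. by rewrite /mextend msuppX big_seq1 mcoeffX eqxx scale1r. Qed.

End MonomialExtension.

Section DividedPowers.
Variables (n : nat) (K : fieldType).
#[local] Hint Constructors inD : core.

Implicit Types (i j : 'I_n) (m : 'X_{1..n}) (f g h : {mpoly K[n]}) (a b e : Op n K).

Lemma ddiff_mextend i k :
  ddiff (K := K) i k = mextend (fun m => ('C(m i, k))%:R *: 'X_[(m - U_(i) *+ k)%MM]).
Proof.
by apply: functional_extensionality => g; apply: eq_bigr => m _; rewrite scalerA.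
Qed.

Lemma ddiffX i k m :
  ddiff i k 'X_[m] = ('C(m i, k))%:R *: 'X_[(m - U_(i) *+ k)%MM] :> {mpoly K[n]}.
Proof. by rewrite ddiff_mextend mextendX. Qed.

Lemma inD_linear a : inD a -> linear a.
Proof.
elim=> {a} [f|i k|a b _ La _ Lb|a b _ La _ Lb|c a _ La] d g h.
- by rewrite /mulOp mulrDr scalerAr.
- by rewrite ddiff_mextend mextend_linear.
- by rewrite /addOp La Lb scalerDr addrACA.
- by rewrite /compOp Lb La.
- by rewrite /scaleOp La scalerDr !scalerA mulrC.
Qed.

Lemma linear_op0 a : linear a -> a 0 = 0.
Proof.
move=> La; apply: (@addrI _ (a 0)); have := La 1 0 0.
by rewrite !scale1r !addr0 => <-.
Qed.

Lemma linear_opD a : linear a -> forall f g, a (f + g) = a f + a g.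
Proof. by move=> La f g; have := La 1 f g; rewrite !scale1r. Qed.

Lemma linear_op_ext a b : linear a -> linear b ->
  (forall m, a 'X_[m] = b 'X_[m]) -> a = b.
Proof.
move=> La Lb eq_ab; apply: functional_extensionality => h.
elim/mpolyind: h => [|c m p _ _ IH]; first by rewrite !linear_op0.
by rewrite La Lb eq_ab IH.
Qed.

Lemma ddiff0 i : ddiff (K := K) i 0 = @idOp n K.
Proof.
apply: linear_op_ext => [||m]; [exact/inD_linear/inD_dd | by [] |].
rewrite ddiffX bin0 scale1r; congr 'X_[_]; apply/mnmP => j.
by rewrite mnmBE mulmnE muln0 subn0.
Qed.

Lemma ddiffS_mulX i j k :
  compOp (ddiff (K := K) i k.+1) (mulOp 'X_j) =
  addOp (compOp (mulOp 'X_j) (ddiff i k.+1))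
        (if i == j then ddiff i k else mulOp 0).
Proof.
apply: linear_op_ext; do ?by apply: inD_linear; case: (i == j); auto.
move=> m; rewrite /compOp /mulOp /addOp -mpolyXD !ddiffX -scalerAr -mpolyXD.
rewrite mnmDE mnm1E; case: (eqVneq i j) => [<-|ne_ij]; last first.
  rewrite add0n mul0r addr0; congr (_ *: 'X_[_]); apply/mnmP => l.
  rewrite !(mnmBE, mnmDE, mulmnE, mnm1E).
  by case: (eqVneq i l) => [<-|_]; rewrite ?(eq_sym j) ?(negbTE ne_ij) ?mul0n ?subn0.
rewrite ddiffX add1n binS natrD scalerDl.
have -> : (U_(i) + m - U_(i) *+ k.+1 = m - U_(i) *+ k)%MM.
  apply/mnmP => l; rewrite !(mnmBE, mnmDE, mulmnE, mnm1E).
  by case: (eqVneq i l) => [<-|_] /=; rewrite ?muln1 ?add1n ?subSS // !muln0.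
congr (_ + _); have [lt_mk|le_km] := ltnP (m i) k.+1.
  by rewrite bin_small // !scale0r.
congr (_ *: 'X_[_]); apply/mnmP => l; rewrite !(mnmBE, mnmDE, mulmnE, mnm1E).
case: (eqVneq i l) => [<-|_] /=; rewrite ?muln1 ?add1n ?muln0 ?subn0 //.
by rewrite !mul1n subnS prednK // subn_gt0.
Qed.

Lemma ddiff_comp i k l :
  compOp (ddiff (K := K) i k) (ddiff i l) = scaleOp ('C(k + l, k))%:R (ddiff i (k + l)).
Proof.
apply: linear_op_ext; do ?by apply: inD_linear; auto.
move=> m; rewrite /compOp /scaleOp !ddiffX (scalable_linear (inD_linear (inD_dd _ _ _))) /=.
rewrite ddiffX !scalerA mnmBE mulmnE mnm1E eqxx mul1n -!natrM bin_mul_bin_sub mulnC.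
congr (_ *: 'X_[_]); apply/mnmP => j; rewrite !(mnmBE, mulmnE, mnm1E).
by rewrite -subnDA -mulnDr addnC.
Qed.

Lemma ddiff_nilpotent p i k : p \in [pchar K] -> (0 < k)%N ->
  compOp (ddiff (K := K) i k) (ddiff i (p.-1 * k)) = mulOp 0.
Proof.
move=> charKp k_gt0; rewrite ddiff_comp.
have -> : (k + p.-1 * k = p * k)%N.
  by rewrite -{1}[k]mul1n -mulnDl add1n prednK // prime_gt0 // (pcharf_prime charKp).
have /eqP-> : ('C(p * k, k))%:R == 0 :> K.
  by rewrite -(dvdn_pcharf charKp) dvdn_bin_mul.
by apply: functional_extensionality => h; rewrite /scaleOp /mulOp scale0r mul0r.
Qed.

Lemma ddiff_neq0 i k : ddiff (K := K) i k <> mulOp 0.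
Proof.
move=> /(congr1 (fun a => a 'X_[U_(i) *+ k])); rewrite /mulOp mul0r ddiffX.
rewrite mulmnE mnm1E eqxx mul1n binn scale1r.
have -> : (U_(i) *+ k - U_(i) *+ k = 0)%MM by apply/mnmP => j; rewrite mnmBE subnn mnm0E.
by rewrite mpolyX0 => /eqP; rewrite oner_eq0.
Qed.

Lemma msize_ddiff_lt i k h : (0 < k)%N -> h != 0 -> (msize (ddiff i k h) < msize h)%N.
Proof.
move=> k_gt0 h_neq0; apply: leq_ltn_trans (msize_sum _ _ _) _.
rewrite big_seq; elim/big_ind: _ => [|u v ? ?|m m_h]; first by rewrite lt0n msize_poly_eq0.
  by rewrite gtn_max; apply/andP.
have [lt_mk|le_km] := ltnP (m i) k.
  by rewrite bin_small // mulr0 scale0r msize0 lt0n msize_poly_eq0.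
apply: leq_ltn_trans (msizeZ_le _ _) _; rewrite msizeX.
apply: leq_trans (msize_mdeg_lt m_h).
have le_km' : (U_(i) *+ k <= m)%MM.
  by apply/mnm_lepP => j; rewrite mulmnE mnm1E; case: eqVneq => [<-|]; rewrite ?mul1n.
by rewrite -{2}(submK le_km') mdegD mdegMn mdeg1 mul1n; lia.
Qed.

Lemma ddiff_add_mul_neq0 i k g h : (0 < k)%N -> g != 0 -> h != 0 ->
  ddiff i k h + g * h != 0.
Proof.
move=> k_gt0 g_neq0 h_neq0; rewrite addrC addr_eq0; apply/eqP => E.
have := msize_ddiff_lt i k_gt0 h_neq0; rewrite -msizeN -E msizeM //.
have : (0 < msize g)%N by rewrite lt0n msize_poly_eq0.
by move: (msize g) (msize h) => a b; lia.
Qed.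

Lemma ddiff_add_mul_comp_eq0 i k g a : (0 < k)%N -> g != 0 ->
  compOp (addOp (ddiff i k) (mulOp g)) a = mulOp 0 -> a = mulOp 0.
Proof.
move=> k_gt0 g_neq0 E; apply: functional_extensionality => h.
rewrite [RHS]/mulOp mul0r; apply/eqP/negPn/negP => ah_neq0.
have := ddiff_add_mul_neq0 i k_gt0 g_neq0 ah_neq0.
by have := congr1 (fun b => b h) E; rewrite /compOp /addOp /mulOp mul0r => ->; rewrite eqxx.
Qed.

End DividedPowers.

Section Commutant.
Variables (n : nat) (K : fieldType).
Implicit Types (f g h : {mpoly K[n]}) (a b e u : Op n K).

Lemma mpoly_alg_ind (P : {mpoly K[n]} -> Prop) :
  P 1 -> (forall i, P 'X_i) -> (forall f g, P f -> P g -> P (f + g)) ->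
  (forall f g, P f -> P g -> P (f * g)) -> (forall c f, P f -> P (c *: f)) ->
  forall f, P f.
Proof.
move=> P1 PX PD PM PZ f; elim/mpolyind: f => [|c m p _ _ Pp].
  by rewrite -(scale0r 1); apply: PZ.
apply: PD => //; apply: PZ; rewrite mpolyXE_id; elim/big_ind: _ => // i _.
by elim: (m i) => [|k IHk]; rewrite ?expr0 // exprS; apply: PM.
Qed.

Lemma mulOp1 : mulOp 1 = @idOp n K.
Proof. by apply: functional_extensionality => h; rewrite /mulOp mul1r. Qed.

Lemma mulOpD f g : mulOp (f + g) = addOp (mulOp f) (mulOp g).
Proof. by apply: functional_extensionality => h; rewrite /mulOp /addOp mulrDl. Qed.

Lemma mulOpM f g : mulOp (f * g) = compOp (mulOp f) (mulOp g).
Proof. by apply: functional_extensionality => h; rewrite /mulOp /compOp mulrA. Qed.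

Lemma mulOpZ r f : mulOp (r *: f) = scaleOp r (mulOp f).
Proof. by apply: functional_extensionality => h; rewrite /mulOp /scaleOp scalerAl. Qed.

Lemma commute_mulX_mulOp e : linear e ->
  (forall j, compOp e (mulOp 'X_j) = compOp (mulOp 'X_j) e) -> e = mulOp (e 1).
Proof.
move=> Le e_comm; have Ze := scalable_linear Le.
have e_mul f h : e (f * h) = f * e h.
  elim/mpoly_alg_ind: f h => [h|j h|f g Hf Hg h|f g Hf Hg h|c f Hf h].
  - by rewrite !mul1r.
  - exact: (congr1 (fun a => a h) (e_comm j)).
  - by rewrite mulrDl (linear_opD Le) Hf Hg mulrDl.
  - by rewrite -mulrA Hf Hg mulrA.
  - by rewrite -scalerAl Ze /= Hf scalerAl.
by apply: functional_extensionality => h; rewrite /mulOp -{1}[h]mulr1 e_mul mulrC.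
Qed.

Definition subOp a b : Op n K := addOp a (scaleOp (-1) b).

Lemma inD_sub a b : inD a -> inD b -> inD (subOp a b).
Proof. by move=> Da Db; apply: inD_add => //; apply: inD_scale. Qed.

Lemma subOp_commute a b u e : linear u ->
  compOp a u = addOp (compOp u a) e -> compOp b u = addOp (compOp u b) e ->
  compOp (subOp a b) u = compOp u (subOp a b).
Proof.
move=> Lu Ea Eb; apply: functional_extensionality => h.
move: (congr1 (fun d => d h) Ea) (congr1 (fun d => d h) Eb).
rewrite /subOp /compOp /addOp /scaleOp => -> ->.
rewrite (linear_opD Lu) (scalable_linear Lu) /= !scaleN1r opprD.
by rewrite addrACA subrr addr0.
Qed.

End Commutant.

Section Automorphism.
Variables (n : nat) (K : fieldType) (s : Op n K -> Op n K).
Hypothesis autD_s : isAutD s.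
Implicit Types a b : Op n K.

Lemma autD_inD a : inD a -> inD (s a).
Proof. by case: autD_s => inD_s _; apply: inD_s. Qed.

Lemma autD_add a b : inD a -> inD b -> s (addOp a b) = addOp (s a) (s b).
Proof. by case: autD_s => _ [add_s _]; apply: add_s. Qed.

Lemma autD_comp a b : inD a -> inD b -> s (compOp a b) = compOp (s a) (s b).
Proof. by case: autD_s => _ [_ [comp_s _]]; apply: comp_s. Qed.

Lemma autD_scale c a : inD a -> s (scaleOp c a) = scaleOp c (s a).
Proof. by case: autD_s => _ [_ [_ [scale_s _]]]; apply: scale_s. Qed.

Lemma autD_id : s (@idOp n K) = @idOp n K.
Proof. by case: autD_s => _ [_ [_ [_ []]]]. Qed.

Lemma autD_inj a b : inD a -> inD b -> s a = s b -> a = b.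
Proof. by case: autD_s => _ [_ [_ [_ [_ [inj _]]]]]; apply: inj. Qed.

Lemma autD_surj b : inD b -> exists2 a, inD a & s a = b.
Proof. by case: autD_s => _ [_ [_ [_ [_ [_ surj]]]]]; apply: surj. Qed.

Lemma autD_mul0 : s (mulOp 0) = mulOp 0.
Proof.
have Z2 : addOp (mulOp 0) (mulOp 0) = mulOp 0 :> Op n K.
  by apply: functional_extensionality => h; rewrite /addOp /mulOp mul0r addr0.
have := autD_add (inD_mul (0 : {mpoly K[n]})) (inD_mul 0); rewrite Z2 => E.
apply: functional_extensionality => h; rewrite [RHS]/mulOp mul0r.
by apply: (@addrI _ (s (mulOp 0) h)); rewrite addr0 {3}E.
Qed.

Lemma autD_ddiffS_mulX (i j : 'I_n) k :
  compOp (s (ddiff i k.+1)) (s (mulOp 'X_j)) =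
  addOp (compOp (s (mulOp 'X_j)) (s (ddiff i k.+1)))
        (s (if i == j then ddiff i k else mulOp 0)).
Proof.
have inD_if : inD (if i == j then ddiff (K := K) i k else mulOp 0).
  by case: (i == j); constructor.
rewrite -autD_comp; try by constructor.
rewrite (ddiffS_mulX K i j k) autD_add //; last by apply: inD_comp; constructor.
by congr addOp; apply: autD_comp; constructor.
Qed.

End Automorphism.

Section TwoAutomorphisms.
Variables (n : nat) (K : fieldType) (s t : Op n K -> Op n K).
Hypotheses (autD_s : isAutD s) (autD_t : isAutD t).

#[local] Hint Constructors inD : core.

(* Apply [s] and [t] to [d^[k] d^[(p-1)k] = 0]: since [d^[k] + g] is injective
   for [g != 0], this would force [d^[(p-1)k] = 0]. *)
Lemma autD_ddiff_eq_add_mul_eq0 p (i : 'I_n) k g : p \in [pchar K] -> (0 < k)%N ->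
  s (ddiff i k) = t (addOp (ddiff i k) (mulOp g)) -> g = 0.
Proof.
move=> charKp k_gt0 eq_st; have [//|g_neq0] := eqVneq g 0.
exfalso; apply: (@ddiff_neq0 n K i (p.-1 * k)).
have [a Da ta] := autD_surj autD_t (autD_inD autD_s (inD_dd K i (p.-1 * k))).
have Dd : inD (addOp (ddiff i k) (mulOp g)) by auto.
have a0 : a = mulOp 0.
  apply: (ddiff_add_mul_comp_eq0 (i := i) k_gt0 g_neq0); apply: (autD_inj autD_t); auto.
  rewrite (autD_mul0 autD_t) (autD_comp autD_t) // ta -eq_st -(autD_comp autD_s) //.
  by rewrite ddiff_nilpotent // (autD_mul0 autD_s).
apply: (autD_inj autD_s) => //.
by rewrite -ta a0 (autD_mul0 autD_s) (autD_mul0 autD_t).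
Qed.

Hypothesis eq_st_X : forall i : 'I_n, s (mulOp 'X_i) = t (mulOp 'X_i).

Lemma autD_eq_mulOp f : s (mulOp f) = t (mulOp f).
Proof.
elim/mpoly_alg_ind: f => [|i|f g Ef Eg|f g Ef Eg|r f Ef].
- by rewrite mulOp1 (autD_id autD_s) (autD_id autD_t).
- exact: eq_st_X.
- by rewrite mulOpD (autD_add autD_s) // (autD_add autD_t) // Ef Eg.
- by rewrite mulOpM (autD_comp autD_s) // (autD_comp autD_t) // Ef Eg.
- by rewrite mulOpZ (autD_scale autD_s) // (autD_scale autD_t) // Ef.
Qed.

Lemma autD_ddiffS_eq_add_mul (i : 'I_n) k : s (ddiff i k) = t (ddiff i k) ->
  exists g, s (ddiff i k.+1) = t (addOp (ddiff i k.+1) (mulOp g)).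
Proof.
move=> eq_st_k.
have [e De se] := autD_surj autD_s (inD_sub (autD_inD autD_s (inD_dd K i k.+1))
                                            (autD_inD autD_t (inD_dd K i k.+1))).
have e_comm j : compOp e (mulOp 'X_j) = compOp (mulOp 'X_j) e.
  apply: (autD_inj autD_s (inD_comp De (inD_mul _)) (inD_comp (inD_mul _) De)).
  rewrite (autD_comp autD_s De (inD_mul _)) (autD_comp autD_s (inD_mul _) De) se.
  apply: (subOp_commute (e := s (if i == j then ddiff i k else mulOp 0))).
  - exact/inD_linear/(autD_inD autD_s).
  - exact: autD_ddiffS_mulX.
  - rewrite eq_st_X (autD_ddiffS_mulX autD_t); congr addOp.
    by case: (i == j); rewrite ?eq_st_k ?autD_eq_mulOp.
exists (e 1); rewrite (autD_add autD_t) // -autD_eq_mulOp.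
rewrite -(commute_mulX_mulOp (inD_linear De) e_comm) se.
by apply: functional_extensionality => h; rewrite /subOp /addOp /scaleOp scaleN1r addrC subrK.
Qed.

Lemma autD_eq_ddiff p : p \in [pchar K] ->
  forall (i : 'I_n) k, s (ddiff i k) = t (ddiff i k).
Proof.
move=> charKp i; elim=> [|k IHk]; first by rewrite ddiff0 (autD_id autD_s) (autD_id autD_t).
have [g Eg] := autD_ddiffS_eq_add_mul IHk.
rewrite Eg (autD_ddiff_eq_add_mul_eq0 charKp (ltn0Sn k) Eg); congr t.
by apply: functional_extensionality => h; rewrite /addOp /mulOp mul0r addr0.
Qed.

End TwoAutomorphisms.

Theorem theorem1p1 (K : fieldType) (p : nat) (charK : p \in [pchar K])
    (n : nat) (sigma tau : Op n K -> Op n K) :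
  isAutD sigma -> isAutD tau ->
  ((forall a : Op n K, inD a -> sigma a = tau a) <->
   (forall i : 'I_n, sigma (mulOp 'X_i) = tau (mulOp 'X_i))).
Proof.
move=> autD_s autD_t; split=> [eq_st i | eq_st_X a]; first exact/eq_st/inD_mul.
elim=> {a} [f|i k|a b Da Ea Db Eb|a b Da Ea Db Eb|c a Da Ea].
- exact: (autD_eq_mulOp autD_s autD_t eq_st_X).
- exact: (autD_eq_ddiff autD_s autD_t eq_st_X charK).
- by rewrite (autD_add autD_s) // (autD_add autD_t) // Ea Eb.
- by rewrite (autD_comp autD_s) // (autD_comp autD_t) // Ea Eb.
- by rewrite (autD_scale autD_s) // (autD_scale autD_t) // Ea.
Qed.
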